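(* Let $F:\mathbb{R}^n\rightrightarrows\mathbb{R}^p$ be a nearly convex set-valued mapping and $\Omega\subset\mathbb{R}^n$ a nearly convex set such that $\operatorname{ri}(\operatorname{dom} F)\cap\operatorname{ri}\Omega\neq\emptyset$. Then $$\operatorname{ri}\big(F(\Omega)\big)=\bigcup_{x\in(\operatorname{ri}\Omega)\cap\operatorname{ri}(\operatorname{dom} F)}\operatorname{ri} F(x),$$ where $F(\Omega)=\bigcup_{x\in\Omega}F(x)$.
   Context: A set $\Omega\subset\mathbb{R}^k$ is nearly convex if there is a convex set $C$ with $C\subset\Omega\subset\overline{C}$. For an arbitrary set $\Omega$, $\operatorname{ri}\Omega=\{a\in\Omega:\exists\delta>0,\ B(a;\delta)\cap\operatorname{aff}\Omega\subset\Omega\}$. For $F:\mathbb{R}^n\rightrightarrows\mathbb{R}^p$: $\operatorname{dom} F=\{x:F(x)\neq\emptyset\}$, $\operatorname{gph} F=\{(x,y):y\in F(x)\}$; $F$ is nearly convex if $\operatorname{gph} F$ is a nearly convex subset of $\mathbb{R}^n\times\mathbb{R}^p$. *)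

From HB Require Import structures.
From mathcomp Require Import all_boot all_order all_algebra.
From mathcomp Require Import all_classical all_reals all_analysis.
Set Implicit Arguments. Unset Strict Implicit. Unset Printing Implicit Defensive.
Import Order.TTheory GRing.Theory Num.Theory.
Import numFieldNormedType.Exports.
Local Open Scope classical_set_scope.
Local Open Scope ring_scope.

Section Defs.
Variable R : realType.

Definition enorm (k : nat) (v : 'rV[R]_k) : R :=
  Num.sqrt (\sum_(i < k) v ord0 i ^+ 2).
Definition eball (k : nat) (a : 'rV[R]_k) (d : R) : set 'rV[R]_k :=
  [set x | enorm (x - a) < d].

Definition convex_set (k : nat) (C : set 'rV[R]_k) : Prop :=
  forall x y t, C x -> C y -> 0 <= t <= 1 -> C (t *: x + (1 - t) *: y).

Definition affine_set (k : nat) (A : set 'rV[R]_k) : Prop :=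
  forall x y (t : R), A x -> A y -> A (t *: x + (1 - t) *: y).

Definition aff (k : nat) (Om : set 'rV[R]_k) : set 'rV[R]_k :=
  [set x | forall A, affine_set A -> Om `<=` A -> A x].

Definition nearly_convex (k : nat) (Om : set 'rV[R]_k) : Prop :=
  exists C : set 'rV[R]_k, convex_set C /\ C `<=` Om /\ Om `<=` closure C.

Definition ri (k : nat) (Om : set 'rV[R]_k) : set 'rV[R]_k :=
  [set a | Om a /\ exists d : R, 0 < d /\ eball a d `&` aff Om `<=` Om].

Definition dom (n p : nat) (F : 'rV[R]_n -> set 'rV[R]_p) : set 'rV[R]_n :=
  [set x | F x !=set0].
Definition gph (n p : nat) (F : 'rV[R]_n -> set 'rV[R]_p) : set 'rV[R]_(n + p) :=
  [set z | exists x y, F x y /\ z = row_mx x y].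
Definition nearly_convex_map (n p : nat) (F : 'rV[R]_n -> set 'rV[R]_p) : Prop :=
  nearly_convex (gph F).
Definition image_set (n p : nat) (F : 'rV[R]_n -> set 'rV[R]_p) (Om : set 'rV[R]_n)
  : set 'rV[R]_p := \bigcup_(x in Om) F x.
End Defs.

From mathcomp Require Import all_boot all_order all_algebra.
From mathcomp Require Import all_classical all_reals all_analysis.
From mathcomp Require Import ring lra zify.
(* Imported last: all_analysis has its own [convex_set]. *)
Set Implicit Arguments. Unset Strict Implicit. Unset Printing Implicit Defensive.
Import Order.TTheory GRing.Theory Num.Theory.
Import numFieldNormedType.Exports.
Local Open Scope classical_set_scope.
Local Open Scope ring_scope.

(* Call a convex set C with C ⊆ X ⊆ cl C a core of X, so that X is nearly convex iff
   it has a core.  Two facts drive the proof: ri X = ri C for every core C of X, and a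
   point z of X lies in ri X iff every segment from a point of X to z can be prolonged a
   little beyond z inside X.  For a core K of gph F they give
   ri (gph F) = {(x, y) | x ∈ ri (dom F), y ∈ ri F(x)}.  If W is a core of Ω, then
   {y | (x, y) ∈ K for some x ∈ W} is a core of F(Ω).  Given y ∈ ri F(Ω), prolong the
   segment from y0, where (x0, y0) ∈ ri K lies over the common point x0, beyond y to some
   y' ∈ F(x'), x' ∈ Ω; going back along the segment from (x0, y0) to (x', y') gives
   x ∈ ri Ω with (x, y) ∈ ri K.  Conversely, if x ∈ ri Ω ∩ ri (dom F) and y ∈ ri F(x),
   segments into y prolong because (x, y) ∈ ri (gph F) and x ∈ ri Ω prolong together. *)

Section MatrixNorm.
Variable R : realDomainType.

Lemma normr_entry m n (M : 'M[R]_(m, n)) i j : `|M i j| <= `|M|.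
Proof.
rewrite [leRHS]/Num.Def.normr /= mx_normrE; apply/bigmax_geP; right => /=.
by exists (i, j).
Qed.

Lemma normr_le_entries m n (M : 'M[R]_(m, n)) (e : R) :
  0 <= e -> (forall i j, `|M i j| <= e) -> `|M| <= e.
Proof.
move=> e0 Me; rewrite [leLHS]/Num.Def.normr /= mx_normrE.
by apply: bigmax_le => // -[i j] _; exact: Me.
Qed.

Lemma normr_mulmx k m (v : 'rV[R]_k) (M : 'M[R]_(k, m)) :
  `|v *m M| <= k%:R * (`|v| * `|M|).
Proof.
apply: normr_le_entries => [|i j]; first by rewrite !mulr_ge0.
rewrite mxE; apply: le_trans (ler_norm_sum _ _ _) _.
rewrite mulr_natl -[X in _ *+ X](card_ord k) -sumr_const.
apply: ler_sum => l _; rewrite normrM (ord1 i).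
by apply: ler_pM; rewrite ?normr_ge0 ?normr_entry.
Qed.

End MatrixNorm.

Lemma closure_normP (R : numFieldType) (V : normedModType R) (S : set V) b :
  closure S b <-> forall e, 0 < e -> exists2 c, S c & `|c - b| < e.
Proof.
split=> [clS e e0 | Sb B /nbhs_ballP [e e0 eB]].
  have [c [Sc]] := clS _ (nbhsx_ballx b _ e0).
  by rewrite -ball_normE /= distrC; exists c.
have [c Sc cb] := Sb e e0; exists c; split => //; apply: eB.
by rewrite -ball_normE /= distrC.
Qed.

Section EuclideanNorm.
Variable R : realType.

Lemma normr_le_enorm k (v : 'rV[R]_k) : `|v| <= enorm v.
Proof.
apply: normr_le_entries => [|i j]; first exact: sqrtr_ge0.
rewrite /enorm -sqrtr_sqr (ord1 i) ler_sqrt; last by apply: sumr_ge0 => l _; exact: sqr_ge0.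
by rewrite (bigD1 j) //= lerDl; apply: sumr_ge0 => l _; exact: sqr_ge0.
Qed.

Lemma enorm_le_normr k (v : 'rV[R]_k) : enorm v <= k.+1%:R * `|v|.
Proof.
rewrite /enorm -[leRHS]ger0_norm ?mulr_ge0 // -sqrtr_sqr ler_sqrt ?sqr_ge0 //.
apply: (@le_trans _ _ (\sum_(j < k) `|v| ^+ 2)).
  apply: ler_sum => j _; rewrite -real_normK ?num_real //.
  by rewrite lerXn2r ?nnegrE ?normr_ge0 // (normr_entry v ord0 j).
rewrite sumr_const card_ord exprMn -[_ *+ k]mulr_natl ler_wpM2r ?sqr_ge0 //.
by rewrite -natrX ler_nat; nia.
Qed.

End EuclideanNorm.

Lemma rank_col_mx_lt (K : fieldType) m k (B : 'M[K]_(m, k)) (u : 'rV[K]_k) :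
  ~~ (u <= B)%MS -> (\rank B < \rank (col_mx B u))%N.
Proof.
move=> uB; suff: (B < col_mx B u)%MS by rewrite ltmxErank => /andP[].
rewrite ltmxE col_mx_sub submx_refl uB andbT.
by have := submx_refl (col_mx B u); rewrite col_mx_sub => /andP[].
Qed.

Section AffineHull.
Variables (R : realType) (k : nat).
Implicit Types (S C A : set 'rV[R]_k) (b c u w z : 'rV[R]_k).

Lemma riP S z : ri S z <->
  S z /\ exists2 d : R, 0 < d & forall w, `|w - z| < d -> aff S w -> S w.
Proof.
split=> [[Sz [d [d0 sub]]] | [Sz [d d0 sub]]]; split=> //.
  exists (d / k.+1%:R) => [|w wz Sw]; first by rewrite divr_gt0.
  apply: sub; split=> //; rewrite /eball /=.
  by apply: le_lt_trans (enorm_le_normr _) _; rewrite mulrC -ltr_pdivlMr.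
exists d; split=> // w [wz Sw]; apply: sub => //.
exact: le_lt_trans (normr_le_enorm _) wz.
Qed.

Lemma aff_affine S : affine_set (aff S).
Proof. by move=> x y t Sx Sy A affA SA; exact: affA (Sx A affA SA) (Sy A affA SA). Qed.

Lemma sub_aff S : S `<=` aff S.
Proof. by move=> x Sx A _; apply. Qed.

Lemma aff_sub_affine S A : affine_set A -> S `<=` A -> aff S `<=` A.
Proof. by move=> affA SA x; apply. Qed.

Lemma affine_setZ A c u (t : R) : affine_set A -> A c -> A (c + u) ->
  A (c + t *: u).
Proof.
move=> affA Ac Acu; have -> : c + t *: u = t *: (c + u) + (1 - t) *: c.
  by apply/rowP => j; rewrite !mxE; ring.
exact: affA.
Qed.

Lemma affine_setD A c u w : affine_set A -> A c -> A (c + u) -> A (c + w) ->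
  A (c + (u + w)).
Proof.
move=> affA Ac Acu Acw.
have -> : c + (u + w) = 2 *: (2^-1 *: (c + u) + (1 - 2^-1) *: (c + w)) + (1 - 2) *: c.
  by apply/rowP => j; rewrite !mxE; field.
by apply: (affA) => //; apply: (affA).
Qed.

Lemma aff_rowspace C c m (B : 'M[R]_(m, k)) u : C c ->
  (forall i, C (c + row i B)) -> (u <= B)%MS -> aff C (c + u).
Proof.
move=> Cc CB uB A affA CA; rewrite -(mulmxKpV uB) mulmx_sum_row.
have Ac : A c by exact: CA.
apply: (big_ind (fun x => A (c + x))); first by rewrite addr0.
  by move=> x y; exact: affine_setD.
by move=> i _; apply: affine_setZ => //; exact: CA.
Qed.

Lemma aff_sub_rowspace C c m (B : 'M[R]_(m, k)) w :
  (forall b, C b -> (b - c <= B)%MS) -> aff C w -> (w - c <= B)%MS.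
Proof.
move=> CB; apply: (aff_sub_affine (A := [set x | (x - c <= B)%MS])) => // x y t /= xB yB.
have -> : t *: x + (1 - t) *: y - c = t *: (x - c) + (1 - t) *: (y - c).
  by apply/rowP => j; rewrite !mxE; ring.
by apply: addmx_sub; exact: scalemx_sub.
Qed.

Lemma exists_spanning_directions C c : exists m (B : 'M[R]_(m, k)),
  (forall i, C (c + row i B)) /\ (forall b, C b -> (b - c <= B)%MS).
Proof.
(* induction on k - \rank B: a direction outside the row space raises the rank *)
suff ext : forall r m (B : 'M[R]_(m, k)), (forall i, C (c + row i B)) ->
    (k - \rank B <= r)%N -> exists m (B : 'M[R]_(m, k)),
    (forall i, C (c + row i B)) /\ (forall b, C b -> (b - c <= B)%MS).
  by apply: (ext k 0 0) => [[]//|]; rewrite leq_subr.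
elim=> [|r IH] m B CB rkB;
  have [span|/existsNP[b /not_implyP[Cb /negP bB]]] :=
    pselect (forall b, C b -> (b - c <= B)%MS); try by exists m, B.
all: have rk_lt : (\rank B < \rank (col_mx B (b - c)))%N := rank_col_mx_lt bB.
all: have rk_le := rank_leq_col (col_mx B (b - c)).
  by lia.
apply: (IH _ (col_mx B (b - c))); last by lia.
move=> i; case: (split_ordP i) => j ->; rewrite ?rowKu // rowKd.
have -> : row j (b - c) = b - c by apply/rowP => l; rewrite mxE (ord1 j).
by rewrite addrC subrK.
Qed.

Lemma closure_sub_aff C : closure C `<=` aff C.
Proof.
move=> b /closure_normP clC.
have [c Cc _] := clC 1 ltr01.
have [m [B [CB span]]] := exists_spanning_directions C c.
(* Q projects onto the row space of B; b - c is fixed by Q as a limit of fixed vectors. *)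
pose Q := pinvmx B *m B.
suff bcQ : (b - c) *m Q = b - c.
  have bcB : (b - c <= B)%MS by rewrite -bcQ mulmxA submxMl.
  by rewrite -[b](subrK c) addrC; exact: aff_rowspace bcB.
apply/eqP; rewrite -subr_eq0; apply/eqP.
set f := _ *m Q - _; have [//|f0] := eqVneq f 0.
have Q0 : 0 <= k%:R * `|Q| by rewrite mulr_ge0.
have e0 : 0 < `|f| / (1 + k%:R * `|Q|) by rewrite divr_gt0 ?normr_gt0 //; lra.
have [b' Cb' b'b] := clC _ e0.
have fE : f = (b - b') *m Q - (b - b').
  have b'Q : (b' - c) *m Q = b' - c by rewrite mulmxA mulmxKpV ?span.
  rewrite /f; have -> : b - c = (b - b') + (b' - c) by rewrite addrA subrK.
  rewrite mulmxDl b'Q; apply/rowP => j; rewrite !mxE; ring.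
suff : `|f| < `|f| by rewrite ltxx.
rewrite {1}fE; apply: le_lt_trans (ler_normB _ _) _.
apply: le_lt_trans (lerD (normr_mulmx _ _) (lexx _)) _.
have -> : k%:R * (`|b - b'| * `|Q|) + `|b - b'| = `|b' - b| * (1 + k%:R * `|Q|).
  by rewrite distrC; ring.
by rewrite -ltr_pdivlMr //; lra.
Qed.

End AffineHull.

Section Convex.
Variables (R : realType) (k : nat).
Implicit Types (S C T : set 'rV[R]_k) (a b c w z : 'rV[R]_k).

Lemma convex_set_sum_lt1 C c m (mu : 'I_m -> R) (v : 'I_m -> 'rV[R]_k) :
  convex_set C -> C c -> (forall i, C (c + v i)) -> (forall i, 0 <= mu i) ->
  \sum_i mu i < 1 -> C (c + \sum_i mu i *: v i).
Proof.
move=> cC Cc; elim: m mu v => [|m IH] mu v Cv mu0; first by rewrite !big_ord0 addr0.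
rewrite !big_ord_recr /=.
set s := \sum_(i < m) mu _; set a := mu ord_max => mu1.
have a0 : 0 <= a by exact: mu0.
have s0 : 0 <= s by apply: sumr_ge0.
have a1 : 0 < 1 - a by lra.
pose mu' i := mu (widen_ord (leqnSn m) i) / (1 - a).
pose v' i := v (widen_ord (leqnSn m) i).
have Cv' : C (c + \sum_i mu' i *: v' i).
  apply: IH => [i|i|]; [exact: Cv|exact: divr_ge0 (mu0 _) (ltW a1)|].
  by rewrite -mulr_suml ltr_pdivrMr // mul1r ltrBrDr.
have -> : c + (\sum_(i < m) mu (widen_ord (leqnSn m) i) *: v (widen_ord (leqnSn m) i)
    + a *: v ord_max) = a *: (c + v ord_max) + (1 - a) *: (c + \sum_i mu' i *: v' i).
  rewrite /mu' /v' !scalerDr scaler_sumr.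
  under [X in _ = _ + (_ + X)]eq_bigr do rewrite scalerA mulrCA divff ?mulr1 ?lt0r_neq0 //.
  by apply/rowP => j; rewrite !mxE; ring.
by apply: (cC _ _ a (Cv ord_max) Cv'); rewrite a0 /=; lra.
Qed.

Lemma ri_convex_neq0 C c : convex_set C -> C c -> ri C !=set0.
Proof.
move=> cC Cc.
have [m [B [CB span]]] := exists_spanning_directions C c.
pose e : R := (2 * m.+1%:R)^-1.
have e0 : 0 < e by rewrite invr_gt0 mulr_gt0.
pose P := pinvmx B.
have P0 : 0 <= k%:R * `|P| by rewrite mulr_ge0.
pose d := e / (k%:R * `|P| + 1).
have d0 : 0 < d by rewrite divr_gt0 //; lra.
(* Near z, the points of aff C are c plus combinations of the rows of B with
   weights in [0, 2e], and these weights add up to less than 1. *)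
pose z := c + \sum_i e *: row i B.
have zB : (z - c <= B)%MS.
  by rewrite addrC addKr; apply: summx_sub => i _; apply: scalemx_sub; exact: row_sub.
have near_z w : `|w - z| < d -> aff C w -> C w.
  move=> wz Cw; pose l := (w - z) *m P.
  have wzB : (w - z <= B)%MS.
    have -> : w - z = (w - c) - (z - c) by rewrite opprB addrA subrK.
    by apply: addmx_sub; [exact: aff_sub_rowspace Cw|rewrite -scaleN1r scalemx_sub].
  have le_e i : `|l ord0 i| <= e.
    apply: le_trans (normr_entry _ _ _) _; apply: le_trans (normr_mulmx _ _) _.
    rewrite mulrCA; apply: (@le_trans _ _ (d * (k%:R * `|P|))).
      by apply: ler_wpM2r => //; exact: ltW.
    by rewrite /d mulrAC ler_pdivrMr ?ler_pM2l //; lra.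
  have -> : w = c + \sum_i (e + l ord0 i) *: row i B.
    under eq_bigr do rewrite scalerDl.
    by rewrite big_split /= addrA -/z -mulmx_sum_row mulmxKpV // addrC subrK.
  apply: convex_set_sum_lt1 => // [i|].
    by have := le_e i; rewrite ler_norml => /andP[? _]; lra.
  apply: (@le_lt_trans _ _ (\sum_(i < m) 2 * e)).
    by apply: ler_sum => i _; have := le_e i; rewrite ler_norml => /andP[_ ?]; lra.
  rewrite sumr_const card_ord.
  have -> : (2 * e) *+ m = m%:R / m.+1%:R.
    by rewrite -[_ *+ m]mulr_natr /e; field; rewrite nat1r pnatr_eq0.
  by rewrite ltr_pdivrMr ?ltr0Sn // mul1r ltr_nat.
exists z; apply/riP; split; last by exists d.
apply: near_z; first by rewrite subrr normr0.
by have := aff_rowspace Cc CB zB; rewrite addrC subrK.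
Qed.

Lemma ri_extend S z c : ri S z -> S c ->
  exists2 d0 : R, 0 < d0 & forall d, 0 <= d <= d0 -> S (z + d *: (z - c)).
Proof.
move=> /riP[Sz [d d0 sub]] Sc; have zc0 := normr_ge0 (z - c).
exists (d / (`|z - c| + 1)) => [|t /andP[t0 td]]; first by rewrite divr_gt0 //; lra.
apply: sub.
  rewrite addrC addKr normrZ ger0_norm //.
  apply: le_lt_trans (ler_wpM2r zc0 td) _.
  by rewrite mulrAC ltr_pdivrMr ?ltr_pM2l //; lra.
have -> : z + t *: (z - c) = (1 + t) *: z + (1 - (1 + t)) *: c.
  by apply/rowP => j; rewrite !mxE; ring.
by apply: aff_affine; exact: sub_aff.
Qed.

Lemma ri_segment C a b (l : R) : convex_set C -> ri C a -> closure C b ->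
  0 <= l < 1 -> ri C (l *: b + (1 - l) *: a).
Proof.
move=> cC /riP[Ca [d d0 sub]] clb /andP[l0 l1].
have Cb := closure_sub_aff clb; move/closure_normP: clb => clb.
set z := l *: b + _.
pose d' := (1 - l) * d / 2.
have d'0 : 0 < d' by rewrite divr_gt0 // mulr_gt0 // subr_gt0.
have near_z w : `|w - z| < d' -> aff C w -> C w.
  (* w = l c + (1 - l) a' with c in C near b, which puts a' in C near a. *)
  move=> wz Cw; have [c Cc cb] := clb _ d'0.
  pose a' := (1 - l)^-1 *: w + (1 - (1 - l)^-1) *: c.
  have Ca' : C a'.
    apply: sub; last by apply: aff_affine => //; exact: sub_aff.
    have -> : a' - a = (1 - l)^-1 *: ((w - z) + l *: (b - c)).
      by apply/rowP => j; rewrite !mxE; field; lra.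
    rewrite normrZ ger0_norm ?invr_ge0 ?subr_ge0 ?ltW // mulrC ltr_pdivrMr ?subr_gt0 //.
    apply: le_lt_trans (ler_normD _ _) _; rewrite normrZ ger0_norm // [`|b - c|]distrC.
    have : l * `|c - b| <= d' by apply: le_trans (ler_wpM2r (normr_ge0 _) (ltW l1)) _; lra.
    by move: wz; rewrite /d'; lra.
  have -> : w = l *: c + (1 - l) *: a' by apply/rowP => j; rewrite !mxE; field; lra.
  by apply: cC => //; rewrite l0 ltW.
apply/riP; split; last by exists d'.
apply: near_z; first by rewrite subrr normr0.
by apply: aff_affine => //; exact: sub_aff.
Qed.

Lemma closure_segment T a b :
  (forall l : R, 0 <= l < 1 -> T (l *: b + (1 - l) *: a)) -> closure T b.
Proof.
move=> Tab; apply/closure_normP => e e0.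
have ab0 := normr_ge0 (a - b).
pose t := e / (`|a - b| + e + 1).
have t0 : 0 < t by rewrite divr_gt0 //; lra.
have t1 : t < 1 by rewrite ltr_pdivrMr; lra.
exists ((1 - t) *: b + (1 - (1 - t)) *: a); first by apply: Tab; lra.
have -> : (1 - t) *: b + (1 - (1 - t)) *: a - b = t *: (a - b).
  by apply/rowP => j; rewrite !mxE; ring.
rewrite normrZ ger0_norm ?ltW // /t mulrAC ltr_pdivrMr ?ltr_pM2l //; lra.
Qed.

Lemma invr1D_ge0_lt1 (d : R) : 0 < d -> 0 <= (1 + d)^-1 < 1.
Proof. by move=> d0; rewrite invr_ge0 invf_lt1; lra. Qed.

Lemma extension_combE z a (d : R) : 0 < d ->
  (1 + d)^-1 *: (z + d *: (z - a)) + (1 - (1 + d)^-1) *: a = z.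
Proof. by move=> d0; apply/rowP => j; rewrite !mxE; field; lra. Qed.

Lemma ri_of_extension C a z (d : R) : convex_set C -> ri C a -> 0 < d ->
  closure C (z + d *: (z - a)) -> ri C z.
Proof.
move=> cC Ca d0 Cz.
by have := ri_segment cC Ca Cz (invr1D_ge0_lt1 d0); rewrite extension_combE.
Qed.

End Convex.

Section NearlyConvex.
Variables (R : realType) (k : nat) (X C : set 'rV[R]_k).
Hypotheses (cC : convex_set C) (CX : C `<=` X) (XC : X `<=` closure C).

Lemma ri_core_sub : ri C `<=` ri X.
Proof.
have XaffC : aff X `<=` aff C.
  by apply: aff_sub_affine; [exact: aff_affine|move=> x /XC; exact: closure_sub_aff].
move=> z /riP[Cz [d d0 sub]]; apply/riP; split; first exact: CX.
by exists d => // w wz /XaffC Cw; apply: CX; exact: sub.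
Qed.

Lemma ri_core_neq0 z : X z -> ri C !=set0.
Proof. by move=> /XC /(_ _ filterT)[c [Cc _]]; exact: ri_convex_neq0 cC Cc. Qed.

Lemma ri_nearly_convexE : ri X = ri C.
Proof.
apply/seteqP; split=> [z Xz|]; last exact: ri_core_sub.
have [a Ca] := ri_core_neq0 Xz.1.
have [d d0 ext] := ri_extend Xz (CX Ca.1).
by apply: (ri_of_extension cC Ca d0 (XC (ext d _))); rewrite (ltW d0) lexx.
Qed.

Lemma ri_nearly_convexP z : ri X z <->
  X z /\ forall c, X c -> exists2 d : R, 0 < d & X (z + d *: (z - c)).
Proof.
split=> [Xz | [Xz ext]].
  split=> [|c Xc]; first exact: Xz.1.
  have [d d0 ext] := ri_extend Xz Xc.
  by exists d => //; apply: ext; rewrite (ltW d0) lexx.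
rewrite ri_nearly_convexE; have [a Ca] := ri_core_neq0 Xz.
have [d d0 Xd] := ext _ (CX Ca.1).
exact: ri_of_extension cC Ca d0 (XC Xd).
Qed.

End NearlyConvex.

Section RowBlocks.
Variables (R : realType) (n p : nat).
Implicit Types (x : 'rV[R]_n) (y : 'rV[R]_p).

Lemma comb_row_mx (l : R) x x' y y' :
  l *: row_mx x y + (1 - l) *: row_mx x' y' =
  row_mx (l *: x + (1 - l) *: x') (l *: y + (1 - l) *: y').
Proof. by rewrite !scale_row_mx add_row_mx. Qed.

Lemma extend_row_mx (d : R) x x' y y' :
  row_mx x y + d *: (row_mx x y - row_mx x' y') =
  row_mx (x + d *: (x - x')) (y + d *: (y - y')).
Proof. by rewrite opp_row_mx add_row_mx scale_row_mx add_row_mx. Qed.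

Lemma closure_proj (K : set 'rV[R]_(n + p)) x y :
  closure K (row_mx x y) -> closure [set x | exists y, K (row_mx x y)] x.
Proof.
move=> clK B; rewrite -[x in nbhs x](row_mxKl x y) => /continuous_lsubmx/clK[c [Kc Bc]].
by exists (lsubmx c); split=> //; exists (rsubmx c); rewrite hsubmxK.
Qed.

End RowBlocks.

Section Graph.
Variables (R : realType) (n p : nat) (F : 'rV[R]_n -> set 'rV[R]_p).

Lemma gphP x y : gph F (row_mx x y) <-> F x y.
Proof.
split=> [[x' [y' [Fxy' /eq_row_mx[-> ->]]]] // | Fxy].
by exists x, y.
Qed.

Variable K : set 'rV[R]_(n + p).
Hypotheses (cK : convex_set K) (KG : K `<=` gph F) (GK : gph F `<=` closure K).

Let Kfibre x := [set y | K (row_mx x y)].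
Let Kdom := [set x | exists y, K (row_mx x y)].

Lemma dom_core : [/\ convex_set Kdom, Kdom `<=` dom F & dom F `<=` closure Kdom].
Proof.
split=> [x x' t [y Ky] [y' Ky'] t01 | x [y /KG/gphP Fxy] | x [y /gphP/GK]].
- by exists (t *: y + (1 - t) *: y'); rewrite -comb_row_mx; exact: cK.
- by exists y.
- exact: closure_proj.
Qed.

Lemma ri_dom_lift x : ri (dom F) x -> exists y, ri K (row_mx x y).
Proof.
move=> Dx; have [[y Fxy] _] := Dx.
have [c [Kc _]] := GK ((gphP x y).2 Fxy) filterT.
have [r Kr] := ri_convex_neq0 cK Kc; rewrite -(hsubmxK r) in Kr.
have /gphP Fr := KG Kr.1.
have [d d0 ext] := ri_extend Dx (ex_intro _ _ Fr : dom F (lsubmx r)).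
have [y' Fy'] : dom F (x + d *: (x - lsubmx r)) by apply: ext; rewrite (ltW d0) lexx.
have := ri_segment cK Kr (GK ((gphP _ _).2 Fy')) (invr1D_ge0_lt1 d0).
by rewrite comb_row_mx extension_combE // => Kxy; eexists; exact: Kxy.
Qed.

Lemma fibre_core x : ri (dom F) x ->
  [/\ convex_set (Kfibre x), Kfibre x `<=` F x & F x `<=` closure (Kfibre x)].
Proof.
have combK (l : R) (u : 'rV[R]_n) : l *: u + (1 - l) *: u = u.
  by rewrite -scalerDl addrC subrK scale1r.
move=> /ri_dom_lift[y0 Ky0]; split=> [y y' t Ky Ky' t01 | y /KG/gphP // | y Fxy].
  by rewrite /Kfibre /= -[x](combK t) -comb_row_mx; exact: cK.
apply: (closure_segment (a := y0)) => l l01.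
have := (ri_segment cK Ky0 (GK ((gphP _ _).2 Fxy)) l01).1.
by rewrite comb_row_mx combK.
Qed.

Lemma ri_gphP x y : ri (gph F) (row_mx x y) <-> ri (dom F) x /\ ri (F x) y.
Proof.
split=> [Gxy | [Dx Fxy]].
  have [/gphP Fxy ext] := (ri_nearly_convexP cK KG GK _).1 Gxy.
  have [cD DD Dcl] := dom_core.
  have Dx : ri (dom F) x.
    apply/(ri_nearly_convexP cD DD Dcl); split=> [|c [y' Fcy']]; first by exists y.
    have [d d0] := ext _ ((gphP _ _).2 Fcy').
    by rewrite extend_row_mx => /gphP Fd; exists d => //; exists (y + d *: (y - y')).
  split=> //; have [cX XF Fcl] := fibre_core Dx.
  apply/(ri_nearly_convexP cX XF Fcl); split=> [|c Fxc] //.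
  have [d d0] := ext _ ((gphP _ _).2 Fxc).
  by rewrite extend_row_mx subrr scaler0 addr0 => /gphP Fd; exists d.
rewrite (ri_nearly_convexE cK KG GK).
have [y0 Ky0] := ri_dom_lift Dx.
have /gphP Fy0 := KG Ky0.1.
have [d d0 ext] := ri_extend Fxy Fy0.
apply: (ri_of_extension cK Ky0 d0); apply: GK.
by rewrite extend_row_mx subrr scaler0 addr0; apply/gphP/ext; rewrite (ltW d0) lexx.
Qed.

End Graph.

Section Image.
Variables (R : realType) (n p : nat) (F : 'rV[R]_n -> set 'rV[R]_p).
Variables (K : set 'rV[R]_(n + p)) (Om W : set 'rV[R]_n) (x0 : 'rV[R]_n).
Hypotheses (cK : convex_set K) (KG : K `<=` gph F) (GK : gph F `<=` closure K).
Hypotheses (cW : convex_set W) (WO : W `<=` Om) (OW : Om `<=` closure W).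
Hypotheses (Dx0 : ri (dom F) x0) (Ox0 : ri Om x0).

Let T := [set y | exists2 x, W x & K (row_mx x y)].

Let Wx0 : ri W x0.
Proof. by rewrite -(ri_nearly_convexE cW WO OW). Qed.

Lemma image_core :
  [/\ convex_set T, T `<=` image_set F Om & image_set F Om `<=` closure T].
Proof.
split=> [y y' t [x Wx Ky] [x' Wx' Ky'] t01 | y [x Wx /KG/gphP Fxy] | y [x1 Ox1 Fxy]].
- exists (t *: x + (1 - t) *: x'); first exact: cW.
  by rewrite -comb_row_mx; exact: cK.
- by exists x => //; exact: WO.
have [y0 Ky0] := ri_dom_lift cK KG GK Dx0.
apply: (closure_segment (a := y0)) => l l01.
exists (l *: x1 + (1 - l) *: x0); first exact: (ri_segment cW Wx0 (OW Ox1) l01).1.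
by rewrite -comb_row_mx; exact: (ri_segment cK Ky0 (GK ((gphP _ _ _).2 Fxy)) l01).1.
Qed.

Lemma ri_image_sub :
  ri (image_set F Om) `<=` \bigcup_(x in ri Om `&` ri (dom F)) ri (F x).
Proof.
move=> y Sy.
have [y0 Ky0] := ri_dom_lift cK KG GK Dx0.
have /gphP Fy0 := KG Ky0.1.
have [d d0 ext] := ri_extend Sy (ex_intro2 _ _ x0 Ox0.1 Fy0 : image_set F Om y0).
have [x1 Ox1 Fx1] : image_set F Om (y + d *: (y - y0)).
  by apply: ext; rewrite (ltW d0) lexx.
have Wx := ri_segment cW Wx0 (OW Ox1) (invr1D_ge0_lt1 d0).
have := ri_segment cK Ky0 (GK ((gphP _ _ _).2 Fx1)) (invr1D_ge0_lt1 d0).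
rewrite comb_row_mx extension_combE // -(ri_nearly_convexE cK KG GK).
move=> /(ri_gphP cK KG GK)[Dx Fxy].
exists ((1 + d)^-1 *: x1 + (1 - (1 + d)^-1) *: x0) => //.
by split=> //; exact: ri_core_sub WO OW _ Wx.
Qed.

Lemma ri_fibre_sub_image :
  \bigcup_(x in ri Om `&` ri (dom F)) ri (F x) `<=` ri (image_set F Om).
Proof.
move=> y [x [Ox Dx] Fxy].
have Gxy : ri (gph F) (row_mx x y) by apply/(ri_gphP cK KG GK).
have [cT TS ST] := image_core.
apply/(ri_nearly_convexP cT TS ST); split=> [|c [x1 Ox1 Fx1c]].
  by exists x; [exact: Ox.1|exact: Fxy.1].
have [d1 d10 ext1] := ri_extend Gxy ((gphP _ _ _).2 Fx1c).
have [d2 d20 ext2] := ri_extend Ox Ox1.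
have d0 : 0 < Num.min d1 d2 by rewrite lt_min d10 d20.
exists (Num.min d1 d2) => //; exists (x + Num.min d1 d2 *: (x - x1)).
  by apply: ext2; rewrite ltW //= ge_min lexx orbT.
by apply/gphP; rewrite -extend_row_mx; apply: ext1; rewrite ltW //= ge_min lexx.
Qed.

End Image.

Theorem theorem3p1 (R : realType) (n p : nat)
  (F : 'rV[R]_n -> set 'rV[R]_p) (Om : set 'rV[R]_n) :
  nearly_convex_map F -> nearly_convex Om ->
  ri (dom F) `&` ri Om !=set0 ->
  ri (image_set F Om) = \bigcup_(x in ri Om `&` ri (dom F)) ri (F x).
Proof.
move=> [K [cK [KG GK]]] [W [cW [WO OW]]] [x0 [Dx0 Ox0]].
apply/seteqP; split.
  exact: ri_image_sub cK KG GK cW WO OW Dx0 Ox0.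
exact: ri_fibre_sub_image cK KG GK cW WO OW Dx0 Ox0.
Qed.
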